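(* Consider a commutative diagram of finitely generated free abelian groups consisting of injective morphisms $f:A\to B$ and $f':A'\to B'$ and morphisms $g:A\to A'$, $h:B\to B'$ with $f'\circ g=h\circ f$. Assume that $f$ and $f'$ have finite exponent. (1) If $h(B)=\lambda B'$ for some nonzero integer $\lambda$, then $(\exp f)\lambda A'\leq g(A)\leq \frac{\lambda}{\gcd(\lambda,\exp f')}A'$. (2) If $g(A)\leq\mu A'$ for some nonzero integer $\mu$, then $h(B)\leq\frac{\mu}{\gcd(\mu,\exp f)}B'$. (3) If $h$ has finite exponent then so does $g$, and $\exp g\leq (\exp f)(\exp h)$.
   Context: For a morphism $u:M\to N$ of finitely generated abelian groups, $\exp u:=\exp(N/u(M))$ if $N/u(M)$ is finite (where the exponent of a finite abelian group is the lcm of the orders of its elements), and $\exp u:=\infty$ otherwise; $u$ has finite exponent if $\exp u<\infty$. *)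

From HB Require Import structures.
From mathcomp Require Import all_boot all_order all_algebra.
Set Implicit Arguments. Unset Strict Implicit. Unset Printing Implicit Defensive.
Import Order.TTheory GRing.Theory Num.Theory.
Local Open Scope ring_scope.

(* A finitely generated free abelian group of rank n is modelled as Z^n = 'rV[int]_n.
   A morphism Z^m -> Z^n is an integer matrix F : 'M[int]_(m,n), acting on row
   vectors by x |-> x *m F (so composition  G then F'  is  G *m F'). *)

Definition img (m n : nat) (F : 'M[int]_(m, n)) : 'rV[int]_n -> Prop :=
  fun y => exists x : 'rV[int]_m, y = x *m F.

Definition mults (n : nat) (k : int) : 'rV[int]_n -> Prop :=
  fun y => exists z : 'rV[int]_n, y = k *: z.

Definition subgrp_le (n : nat) (H K : 'rV[int]_n -> Prop) : Prop :=
  forall y, H y -> K y.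

(* e is the (finite) exponent of the cokernel N / u(M): the least positive
   integer killing N / u(M) (= lcm of the element orders of the finite group
   N/u(M)).  If no positive integer kills N/u(M), then N/u(M) is infinite and
   exp u = oo; then no e satisfies this predicate. *)
Definition exponent_of (m n : nat) (F : 'M[int]_(m, n)) (e : nat) : Prop :=
  [/\ (0 < e)%N,
      (forall y : 'rV[int]_n, img F ((e%:Z) *: y))
    & (forall e' : nat, (0 < e')%N ->
         (forall y : 'rV[int]_n, img F ((e'%:Z) *: y)) -> (e <= e')%N)].

Definition has_finite_exp (m n : nat) (F : 'M[int]_(m, n)) : Prop :=
  exists e, exponent_of F e.

From HB Require Import structures.
From mathcomp Require Import all_boot all_order all_algebra.
From mathcomp Require Import ring boolp.
Set Implicit Arguments.
Unset Strict Implicit.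
Unset Printing Implicit Defensive.

Import Order.TTheory GRing.Theory Num.Theory.
Local Open Scope ring_scope.

(* Everything is a diagram chase through the square f' o g = h o f: an
   element of B' hit by h pulls back along f up to the factor exp f, and since
   f' is injective, relations between images under f' descend to A'.
   Divisibility of the coefficients of a row is then settled by the integer
   fact that c x = k y with c <> 0 forces k / gcd(k, c) to divide x. *)

Lemma dvdz_divz_gcdz (k c x y : int) :
  c != 0 -> c * x = k * y -> ((k %/ gcdz k c)%Z %| x)%Z.
Proof.
move=> c_neq0 cx_ky; set d := gcdz k c.
have d_neq0 : d != 0 by rewrite gcdz_eq0 negb_and c_neq0 orbT.
have [s [t Bezout_kc]] := Bezoutz k c.
rewrite -(@dvdz_mul2r d) // divzK ?dvdz_gcdl // /d -Bezout_kc.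
have -> : x * (s * k + t * c) = (s * x + t * y) * k.
  by rewrite mulrDl -[t * y * k]mulrA [y * k]mulrC -cx_ky; ring.
exact: dvdz_mull (dvdzz k).
Qed.

Lemma mults_divz_gcdz n (c k : int) (u v : 'rV[int]_n) :
  c != 0 -> c *: u = k *: v -> mults (k %/ gcdz k c)%Z u.
Proof.
move=> c_neq0 cu_kv.
have dvd_u i : ((k %/ gcdz k c)%Z %| u ord0 i)%Z.
  have := congr1 (fun w : 'rV[int]_n => w ord0 i) cu_kv; rewrite !mxE.
  exact: dvdz_divz_gcdz.
exists (\row_i divz (u ord0 i) (k %/ gcdz k c)%Z).
by apply/rowP => i; rewrite !mxE mulrC divzK.
Qed.

Definition annihilates_coker m n (F : 'M[int]_(m, n)) (e : int) : Prop :=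
  forall y : 'rV[int]_n, img F (e *: y).

Lemma exists_exponent_of m n (F : 'M[int]_(m, n)) (e : nat) :
  (0 < e)%N -> annihilates_coker F e%:Z ->
  exists2 e0 : nat, exponent_of F e0 & (e0 <= e)%N.
Proof.
move=> e_gt0 e_ann.
pose kills k := `[< (0 < k)%N /\ annihilates_coker F k%:Z >].
have /ex_minnP[e0 /asboolP[e0_gt0 e0_ann] e0_min] : exists e, kills e.
  by exists e; apply/asboolP.
exists e0; last by apply: e0_min; apply/asboolP.
by split=> // e' e'_gt0 e'_ann; apply: e0_min; apply/asboolP.
Qed.

Lemma mults_of_mulmx m n (F : 'M[int]_(m, n)) (e k : int) (z : 'rV[int]_m) :
  injective (fun x : 'rV[int]_m => x *m F) -> e != 0 ->
  annihilates_coker F e -> mults k (z *m F) -> mults (k %/ gcdz k e)%Z z.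
Proof.
move=> F_inj e_neq0 e_ann [w zF_kw]; have [v ew_vF] := e_ann w.
apply: (mults_divz_gcdz (v := v) e_neq0); apply: F_inj => /=.
by rewrite -!scalemxAl zF_kw -ew_vF scalerA mulrC -scalerA.
Qed.

Section CommutativeSquare.

Variables (a b a' b' : nat).
Variables (f : 'M[int]_(a, b)) (f' : 'M[int]_(a', b')).
Variables (g : 'M[int]_(a, a')) (h : 'M[int]_(b, b')).
Hypothesis f'_inj : injective (fun x : 'rV[int]_a' => x *m f').
Hypothesis comm : g *m f' = f *m h.

Lemma mulmx_square (x : 'rV[int]_a) : x *m g *m f' = x *m f *m h.
Proof. by rewrite -!mulmxA comm. Qed.

Lemma img_g_of_img_h (e k : int) (z : 'rV[int]_a') :
  annihilates_coker f e -> img h (k *: (z *m f')) -> img g ((e * k) *: z).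
Proof.
move=> e_ann [y kzf'_yh]; have [x ey_xf] := e_ann y.
exists x; apply: f'_inj => /=.
by rewrite mulmx_square -ey_xf -!scalemxAl -kzf'_yh scalerA.
Qed.

Lemma mults_sub_img_g (e lambda : int) :
  annihilates_coker f e -> subgrp_le (mults lambda) (img h) ->
  subgrp_le (mults (e * lambda)) (img g).
Proof.
move=> e_ann lambdaB'_sub_hB _ [z ->].
by apply: img_g_of_img_h => //; apply: lambdaB'_sub_hB; exists (z *m f').
Qed.

Lemma img_g_sub_mults (e' : nat) (lambda : int) :
  (0 < e')%N -> annihilates_coker f' e'%:Z ->
  subgrp_le (img h) (mults lambda) ->
  subgrp_le (img g) (mults (lambda %/ gcdz lambda e'%:Z)%Z).
Proof.
move=> e'_gt0 e'_ann hB_sub_lambdaB' _ [x ->].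
apply: mults_of_mulmx f'_inj _ e'_ann _; first by rewrite eqz_nat -lt0n.
by apply: hB_sub_lambdaB'; exists (x *m f); rewrite mulmx_square.
Qed.

Lemma img_h_sub_mults (e : nat) (mu : int) :
  (0 < e)%N -> annihilates_coker f e%:Z -> subgrp_le (img g) (mults mu) ->
  subgrp_le (img h) (mults (mu %/ gcdz mu e%:Z)%Z).
Proof.
move=> e_gt0 e_ann gA_sub_muA' _ [y ->]; have [x ey_xf] := e_ann y.
have [z xg_muz] := gA_sub_muA' _ (ex_intro _ x erefl).
apply: (mults_divz_gcdz (v := z *m f')); first by rewrite eqz_nat -lt0n.
by rewrite scalemxAl ey_xf -mulmx_square xg_muz -scalemxAl.
Qed.

Lemma exponent_of_square (ef eh : nat) :
  exponent_of f ef -> exponent_of h eh ->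
  exists2 eg : nat, exponent_of g eg & (eg <= ef * eh)%N.
Proof.
move=> [ef_gt0 ef_ann _] [eh_gt0 eh_ann _].
apply: exists_exponent_of; first by rewrite muln_gt0 ef_gt0 eh_gt0.
by move=> z; rewrite PoszM; apply: img_g_of_img_h.
Qed.

End CommutativeSquare.

Theorem lemma3p18 (a b a' b' : nat)
  (f : 'M[int]_(a, b)) (f' : 'M[int]_(a', b'))
  (g : 'M[int]_(a, a')) (h : 'M[int]_(b, b'))
  (f_inj : injective (fun x : 'rV[int]_a => x *m f))
  (f'_inj : injective (fun x : 'rV[int]_a' => x *m f'))
  (comm : g *m f' = f *m h)
  (ef ef' : nat) (hef : exponent_of f ef) (hef' : exponent_of f' ef') :
  (* (1) *)
  (forall lambda : int, lambda != 0 ->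
     (forall y : 'rV[int]_b', img h y <-> mults lambda y) ->
     subgrp_le (mults (ef%:Z * lambda)) (img g) /\
     subgrp_le (img g) (mults (lambda %/ gcdz lambda ef'%:Z)%Z)) /\
  (* (2) *)
  (forall mu : int, mu != 0 ->
     subgrp_le (img g) (mults mu) ->
     subgrp_le (img h) (mults (mu %/ gcdz mu ef%:Z)%Z)) /\
  (* (3) *)
  (forall eh : nat, exponent_of h eh ->
     exists eg : nat, exponent_of g eg /\ (eg <= ef * eh)%N).
Proof.
have [ef_gt0 ef_ann _] := hef; have [ef'_gt0 ef'_ann _] := hef'.
split; [|split].
- move=> lambda _ hB_eq_lambdaB'; split.
  + by apply: (mults_sub_img_g f'_inj comm ef_ann) => y /hB_eq_lambdaB'.
  + by apply: (img_g_sub_mults f'_inj comm ef'_gt0 ef'_ann) => y /hB_eq_lambdaB'.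
- by move=> mu _; apply: (img_h_sub_mults comm ef_gt0 ef_ann).
- by move=> eh /(exponent_of_square f'_inj comm hef)[eg]; exists eg.
Qed.
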